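(* Let $\mu_1,\dots,\mu_k$ be probability measures on $\mathbb{R}$ such that, for each $j$, $\lim_{t\to0}H((\mu_j)_t)/|\log t|$ exists. Let $\alpha_j\ge0$ with $\sum_j\alpha_j=1$. Then $$\delta_c\Big(\sum_j\alpha_j\mu_j\Big)=\sum_j\alpha_j\delta_c(\mu_j).$$
   Context: For $t>0$, $\nu_t$ is the centered Gaussian law on $\mathbb{R}$ with variance $t^2$, $\rho_t=\rho*\nu_t$ for a probability measure $\rho$, and $H(p\,dx)=\int p\log p\,dx$. Define $$\delta_c(\rho)=1-\liminf_{t\to0}\frac{H(\rho_t)}{|\log t|}.$$ *)

From HB Require Import structures.
From mathcomp Require Import all_boot all_order all_algebra.
From mathcomp Require Import all_classical all_reals all_analysis.
Set Implicit Arguments. Unset Strict Implicit. Unset Printing Implicit Defensive.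
Import Order.TTheory GRing.Theory Num.Theory.
Local Open Scope classical_set_scope.
Local Open Scope ring_scope.

(* Density of rho_t = rho * nu_t, nu_t = centered Gaussian of variance t^2:
   p_t(x) = \int phi_t(x - y) d rho(y). *)
Definition gauss_smooth_density {R : realType}
  (rho : probability R R) (t : R) (x : R) : R :=
  fine (\int[rho]_y (normal_pdf y t x)%:E)%E.

Definition entropyH {R : realType} (p : R -> R) : \bar R :=
  (\int[@lebesgue_measure R]_x (p x * ln (p x))%:E)%E.

Definition entropy_ratio {R : realType} (rho : probability R R) (t : R)
  : \bar R :=
  (entropyH (gauss_smooth_density rho t) * (`|ln t|^-1)%:E)%E.

Definition liminf_at0 {R : realType} (f : R -> \bar R) : \bar R :=
  ereal_sup [set ereal_inf [set f t | t in `]0, e[] | e in `]0, +oo[].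

Definition delta_c {R : realType} (rho : probability R R) : \bar R :=
  (1 - liminf_at0 (entropy_ratio rho))%E.

From HB Require Import structures.
From mathcomp Require Import all_boot all_order all_algebra.
From mathcomp Require Import all_classical all_reals all_analysis.
From mathcomp Require Import measurable_realfun lra.
Set Implicit Arguments.
Unset Strict Implicit.
Unset Printing Implicit Defensive.
Import Order.TTheory GRing.Theory Num.Theory.
Local Open Scope classical_set_scope.
Local Open Scope ring_scope.

(* The Gaussian smoothing of the mixture is the mixture of the smoothed
   densities, p = sum_j alpha_j q_j.  Pointwise,
     sum_j alpha_j q_j log (alpha_j q_j) <= p log p <= sum_j alpha_j q_j log q_j,
   on the left because alpha_j q_j <= p and log is increasing, on the right by
   convexity of x log x (in Gibbs' form q (log p - log q) <= p - q).
   Integrating gives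
     sum_j alpha_j H(mu_j,t) + sum_j alpha_j log alpha_j <= H(rho_t)
       <= sum_j alpha_j H(mu_j,t),
   and after division by |log t| the constant term vanishes as t -> 0, so
   H(rho_t)/|log t| converges to the alpha-average of the limits for the mu_j;
   the liminf defining delta_c is then this limit. *)

Section gauss_smoothing.
Context {R : realType} (t : R).
Hypothesis t_neq0 : t != 0.
Local Open Scope ereal_scope.

Lemma normal_pdfC (y x : R) : normal_pdf y t x = normal_pdf x t y.
Proof. by rewrite !normal_pdfE// /normal_fun -opprB sqrrN. Qed.

Lemma measurable_normal_pdf_pair :
  measurable_fun [set: measurableTypeR R * R]
    (fun xy : measurableTypeR R * R => normal_pdf xy.2 t xy.1).
Proof.
under eq_fun do rewrite normal_pdfE//.
apply: measurable_funM => //; apply: measurableT_comp => //.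
apply: measurable_funM => //; apply: measurableT_comp => //.
apply/measurable_funX/measurable_funB; [exact: measurable_fst|exact: measurable_snd].
Qed.

Variable P : probability R R.

Lemma gauss_smooth_densityE x :
  (gauss_smooth_density P t x)%:E = \int[P]_y (normal_pdf y t x)%:E.
Proof.
have int_ge0 : 0 <= \int[P]_y (normal_pdf y t x)%:E.
  by apply: integral_ge0 => y _; rewrite lee_fin normal_pdf_ge0.
have int_le_peak : \int[P]_y (normal_pdf y t x)%:E <= (normal_peak t)%:E.
  rewrite -[leRHS]mule1 -(probability_setT P) -integral_cst//.
  apply: ge0_le_integral => //.
  - by move=> y _; rewrite lee_fin normal_pdf_ge0.
  - apply/measurable_EFinP; under eq_fun do rewrite normal_pdfC.
    exact: measurable_normal_pdf.
  - by move=> y _; rewrite lee_fin normal_pdf_ub.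
rewrite /gauss_smooth_density fineK// ge0_fin_numE//.
exact: le_lt_trans int_le_peak (ltry _).
Qed.

Lemma gauss_smooth_density_ge0 x : (0 <= gauss_smooth_density P t x)%R.
Proof.
rewrite /gauss_smooth_density fine_ge0// integral_ge0// => y _.
by rewrite lee_fin normal_pdf_ge0.
Qed.

Lemma measurable_gauss_smooth_density :
  measurable_fun [set: measurableTypeR R] (gauss_smooth_density P t).
Proof.
apply: (measurableT_comp (fine_measurable measurableT)).
apply: (@measurable_fun_fubini_tonelli_F _ _ _ _ _ P
  (fun xy : measurableTypeR R * R => (normal_pdf xy.2 t xy.1)%:E)) => [|xy].
  by apply/measurable_EFinP; exact: measurable_normal_pdf_pair.
by rewrite lee_fin normal_pdf_ge0.
Qed.

Lemma integral_gauss_smooth_density :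
  \int[lebesgue_measure]_x (gauss_smooth_density P t x)%:E = 1.
Proof.
under eq_integral do rewrite gauss_smooth_densityE.
rewrite (@fubini_tonelli _ _ _ _ _ lebesgue_measure P
  (fun xy : measurableTypeR R * R => (normal_pdf xy.2 t xy.1)%:E)) /=.
- under eq_integral do rewrite integral_normal_pdf.
  by rewrite integral_cst//= probability_setT mule1.
- by apply/measurable_EFinP; exact: measurable_normal_pdf_pair.
- by move=> xy; rewrite lee_fin normal_pdf_ge0.
Qed.

End gauss_smoothing.

Section integral_mixture.
Context d (T : measurableType d) (R : realType) (k : nat).
Variables (mu : 'I_k -> {measure set T -> \bar R}) (alpha : 'I_k -> R).
Variable rho : {measure set T -> \bar R}.
Hypothesis alpha_ge0 : forall j, 0 <= alpha j.
Hypothesis rhoE : forall A, measurable A ->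
  rho A = (\sum_(j < k) (alpha j)%:E * mu j A)%E.
Local Open Scope ereal_scope.

(* [msum] sums a [nat]-indexed family, hence the padding by [mzero]. *)
Let scaled_mu (n : nat) : {measure set T -> \bar R} :=
  if insub n is Some j then mscale (NngNum (alpha_ge0 j)) (mu j) else mzero.

Let scaled_muE (j : 'I_k) : scaled_mu j = mscale (NngNum (alpha_ge0 j)) (mu j).
Proof. by rewrite /scaled_mu valK. Qed.

Lemma ge0_integral_mixture (f : T -> \bar R) :
  measurable_fun setT f -> (forall x, 0 <= f x) ->
  \int[rho]_x f x = \sum_(j < k) (alpha j)%:E * \int[mu j]_x f x.
Proof.
move=> mf f_ge0; rewrite (eq_measure_integral (msum scaled_mu k)); last first.
  by move=> A mA _; rewrite rhoE//; apply: eq_bigr => j _; rewrite scaled_muE.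
rewrite ge0_integral_measure_sum//; apply: eq_bigr => j _.
by rewrite scaled_muE ge0_integral_mscale.
Qed.

End integral_mixture.

Section integral_lincomb.
Context d (T : measurableType d) (R : realType) (mu : {measure set T -> \bar R}).
Context (k : nat) (c : 'I_k -> R) (f : 'I_k -> T -> R).
Hypothesis f_int : forall j, mu.-integrable setT (EFin \o f j).
Local Open Scope ereal_scope.

Lemma integrable_lincomb :
  mu.-integrable setT (fun x => (\sum_(j < k) c j * f j x)%:E).
Proof.
have := integrable_sum measurableT (index_enum 'I_k) (P := xpredT)
  (fun j _ => integrableZl measurableT (c j) (f_int j)).
by apply: eq_integrable => // x _; rewrite sumEFin.
Qed.

Lemma integral_lincomb :
  \int[mu]_x (\sum_(j < k) c j * f j x)%:E =
  (\sum_(j < k) c j * fine (\int[mu]_x (f j x)%:E))%:E.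
Proof.
under eq_integral do rewrite -sumEFin.
rewrite integral_sum// => [|j]; last first.
  exact: eq_integrable (integrableZl measurableT (c j) (f_int j)).
rewrite -sumEFin; apply: eq_bigr => j _.
rewrite [LHS](integralZl measurableT (f_int j)).
by rewrite -(fineK (integrable_fin_num measurableT (f_int j))) EFinM.
Qed.

End integral_lincomb.

Lemma integrable_sandwich d (T : measurableType d) (R : realType)
    (mu : {measure set T -> \bar R}) (g f h : T -> R) :
  measurable_fun setT f -> (forall x, g x <= f x <= h x) ->
  mu.-integrable setT (EFin \o g) -> mu.-integrable setT (EFin \o h) ->
  mu.-integrable setT (EFin \o f).
Proof.
move=> mf gfh gi hi.
apply: (le_integrable measurableT _ _
  (integrableD measurableT (integrable_norm gi) (integrable_norm hi))) => [|x _].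
  exact/measurable_EFinP.
have /andP[gf fh] := gfh x.
have := ler_norm (h x); have := ler_norm (- g x); rewrite normrN => ng nh.
have := normr_ge0 (g x); have := normr_ge0 (h x) => h0 g0.
rewrite /comp -EFinD !abse_EFin lee_fin [leRHS]ger0_norm ?addr_ge0//.
by rewrite ler_norml; apply/andP; split; lra.
Qed.

Lemma measurable_xlnx d (T : measurableType d) (R : realType) (p : T -> R) :
  measurable_fun setT p -> measurable_fun setT (fun x => p x * ln (p x)).
Proof.
by move=> mp; apply: measurable_funM => //; apply: measurableT_comp.
Qed.

Lemma mul_lnB_le {R : realType} (p q : R) : 0 < p -> 0 < q ->
  q * (ln p - ln q) <= p - q.
Proof.
move=> p_gt0 q_gt0; rewrite -ln_div ?posrE//.
have := @le_ln1Dx _ (p / q - 1); rewrite addrCA subrr addr0 => /(_ _)/wrap[].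
  by rewrite ltrBrDl subrr divr_gt0.
move=> /(ler_wpM2l (ltW q_gt0)); rewrite mulrBr mulr1 mulrCA divff ?gt_eqF//.
by rewrite mulr1.
Qed.

Section xlnx_mixture.
Context {R : realType} (k : nat) (a q : 'I_k -> R).
Hypotheses (a_ge0 : forall j, 0 <= a j) (q_ge0 : forall j, 0 <= q j).
Let p := \sum_(j < k) a j * q j.

Let term_le_mixture j : a j * q j <= p.
Proof. by rewrite /p (bigD1 j)//= lerDl sumr_ge0// => i _; rewrite mulr_ge0. Qed.

Let mixture_ge0 : 0 <= p.
Proof. by rewrite sumr_ge0// => j _; rewrite mulr_ge0. Qed.

Let mixture_gt0 j : 0 < a j -> 0 < q j -> 0 < p.
Proof. by move=> a_gt0 q_gt0; rewrite (lt_le_trans _ (term_le_mixture j))// mulr_gt0. Qed.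

Let xlnx_mixtureE : p * ln p = \sum_(j < k) a j * (q j * ln p).
Proof. by rewrite /p mulr_suml; apply: eq_bigr => j _; rewrite mulrA. Qed.

Lemma mixture_xlnx_le : \sum_(j < k) a j = 1 ->
  p * ln p <= \sum_(j < k) a j * (q j * ln (q j)).
Proof.
move=> a_sum1; rewrite xlnx_mixtureE -subr_le0 -sumrB.
have gap0 : \sum_(j < k) a j * (p - q j) = 0.
  by rewrite (eq_bigr _ (fun j _ => mulrBr _ _ _)) sumrB -mulr_suml a_sum1 mul1r subrr.
rewrite -[leRHS]gap0; apply: ler_sum => j _; rewrite -mulrBr.
move: (a_ge0 j); rewrite le_eqVlt => /predU1P[<-|a_gt0]; first by rewrite !mul0r.
rewrite ler_pM2l//.
move: (q_ge0 j); rewrite le_eqVlt => /predU1P[<-|q_gt0].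
  by rewrite !mul0r subrr subr0.
by rewrite -mulrBr mul_lnB_le// (mixture_gt0 a_gt0 q_gt0).
Qed.

Lemma mixture_xlnx_ge :
  \sum_(j < k) a j * (q j * ln (q j)) + \sum_(j < k) a j * (q j * ln (a j))
    <= p * ln p.
Proof.
rewrite xlnx_mixtureE -big_split /=; apply: ler_sum => j _.
rewrite -mulrDr -mulrDr.
move: (a_ge0 j); rewrite le_eqVlt => /predU1P[<-|a_gt0]; first by rewrite !mul0r.
move: (q_ge0 j); rewrite le_eqVlt => /predU1P[<-|q_gt0]; first by rewrite !mul0r.
rewrite ler_pM2l// ler_pM2l// addrC -lnM ?posrE//.
by rewrite ler_ln ?posrE ?mulr_gt0 ?term_le_mixture// (mixture_gt0 a_gt0 q_gt0).
Qed.

End xlnx_mixture.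

Section entropyH_mixture.
Context {R : realType} (k : nat) (alpha : 'I_k -> R) (q : 'I_k -> R -> R).
Hypotheses (alpha_ge0 : forall j, 0 <= alpha j)
  (alpha_sum1 : \sum_(j < k) alpha j = 1).
Hypotheses (q_ge0 : forall j x, 0 <= q j x)
  (measurable_q : forall j, measurable_fun setT (q j))
  (integral_q : forall j, (\int[lebesgue_measure]_x (q j x)%:E = 1)%E)
  (integrable_xlnx_q : forall j,
     lebesgue_measure.-integrable setT (fun x => (q j x * ln (q j x))%:E)).
Local Notation p x := (\sum_(j < k) alpha j * q j x).
Local Notation h j := (fine (entropyH (q j))).

Let integrable_q j : lebesgue_measure.-integrable setT (EFin \o q j).
Proof.
apply/integrableP; split; first by apply/measurable_EFinP; exact: measurable_q.
under eq_integral => x _ do rewrite gee0_abs ?lee_fin ?q_ge0//.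
by rewrite integral_q ltry.
Qed.

Let U (x : R) := \sum_(j < k) alpha j * (q j x * ln (q j x)).
Let V (x : R) := \sum_(j < k) alpha j * (q j x * ln (alpha j)).

Let U_le x : p x * ln (p x) <= U x.
Proof. exact: mixture_xlnx_le. Qed.

Let UV_ge x : U x + V x <= p x * ln (p x).
Proof. exact: mixture_xlnx_ge. Qed.

Let integrable_U : lebesgue_measure.-integrable setT (EFin \o U).
Proof. exact: integrable_lincomb. Qed.

Let integrable_V : lebesgue_measure.-integrable setT (EFin \o V).
Proof.
have := integrable_lincomb (fun j => alpha j * ln (alpha j)) integrable_q.
apply: eq_integrable => // x _.
by congr EFin; apply: eq_bigr => j _; rewrite /= mulrAC mulrA.
Qed.

Let integrable_UV : lebesgue_measure.-integrable setT (fun x => (U x + V x)%:E).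
Proof. exact: eq_integrable (integrableD measurableT integrable_U integrable_V). Qed.

Let integral_U :
  (\int[lebesgue_measure]_x (U x)%:E = (\sum_(j < k) alpha j * h j)%:E)%E.
Proof. exact: integral_lincomb. Qed.

Let integral_V :
  (\int[lebesgue_measure]_x (V x)%:E = (\sum_(j < k) alpha j * ln (alpha j))%:E)%E.
Proof.
transitivity
  (\int[lebesgue_measure]_x (\sum_(j < k) (alpha j * ln (alpha j)) * q j x)%:E)%E.
  by apply: eq_integral => x _; congr EFin; apply: eq_bigr => j _; rewrite mulrAC mulrA.
rewrite integral_lincomb//; congr EFin; apply: eq_bigr => j _.
by rewrite integral_q mulr1.
Qed.

Let integrable_xlnx_p :
  lebesgue_measure.-integrable setT (fun x => (p x * ln (p x))%:E).
Proof.
apply: (integrable_sandwich (mu := lebesgue_measure) (g := fun x => U x + V x)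
  (f := fun x => p x * ln (p x)) (h := U)) => //.
- apply: measurable_xlnx; apply: measurable_sum => j.
  by apply: measurable_funM => //; exact: measurable_q.
- by move=> x; rewrite UV_ge U_le.
Qed.

Lemma entropyH_mixture_le :
  (entropyH (fun x => p x) <= (\sum_(j < k) alpha j * h j)%:E)%E.
Proof. by rewrite -integral_U; apply: le_integral => // x _; rewrite lee_fin. Qed.

Lemma entropyH_mixture_ge :
  ((\sum_(j < k) alpha j * h j + \sum_(j < k) alpha j * ln (alpha j))%:E
    <= entropyH (fun x => p x))%E.
Proof.
rewrite EFinD -integral_U -integral_V -integralD//.
by apply: le_integral => // x _; rewrite lee_fin.
Qed.

End entropyH_mixture.

Lemma fin_numMr_gt0 {R : realType} (x : \bar R) (s : R) : 0 < s ->
  ((x * s%:E)%E \is a fin_num) = (x \is a fin_num).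
Proof. by move=> s_gt0; case: x => [r||]//=; rewrite ?gt0_mulye ?gt0_mulNye ?lte_fin. Qed.

Lemma integrable_xlnx_entropyH_fin_num {R : realType} (p : R -> R) :
  measurable_fun setT p -> entropyH p \is a fin_num ->
  lebesgue_measure.-integrable setT (fun x => (p x * ln (p x))%:E).
Proof.
move=> mp Hp; apply/integrableP; split; first exact/measurable_EFinP/measurable_xlnx.
by rewrite integral_fin_num_abs//; exact: measurable_xlnx.
Qed.

Section limits_at_right0.
Context {R : realType}.
Local Open Scope ereal_scope.

Lemma near_right0 (P : R -> Prop) : (\forall t \near 0^'+, P t) ->
  exists2 d : R, (0 < d)%R & forall t, (0 < t < d)%R -> P t.
Proof.
move=> /nbhs_ballP[d /= d_gt0 Pd]; exists d => // t /andP[t_gt0 t_lt_d].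
by apply: Pd => //; rewrite /ball /= sub0r normrN gtr0_norm.
Qed.

Lemma liminf_at0_cvg (f : R -> \bar R) (l : R) :
  f t @[t --> 0^'+] --> l%:E -> liminf_at0 f = l%:E.
Proof.
move=> fl; apply/eqP; rewrite eq_le; apply/andP; split.
  apply: ge_ereal_sup => _ [e /= e_gt0 <-]; rewrite in_itv/= andbT in e_gt0.
  apply: (cvge_to_ge fl); near=> t; apply: ereal_inf_lbound; exists t => //.
  rewrite /= in_itv/=; apply/andP; split; near: t.
    exact: nbhs_right_gt.
  exact: nbhs_right_lt.
apply/lee_subgt0Pr => eps eps_gt0.
have [d d_gt0 f_gt] : exists2 d : R, (0 < d)%R &
    forall t, (0 < t < d)%R -> (l - eps)%:E < f t.
  apply: near_right0; apply: (fl [set u | (l - eps)%:E < u]).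
  by apply: open_ereal_gt'; rewrite lte_fin gtrBl.
apply: le_trans (ereal_sup_ubound _); last by exists d => //; rewrite /= in_itv/= d_gt0.
by apply: le_ereal_inf_tmp => _ [t /= /[!in_itv]/= /f_gt/ltW + <-]; rewrite EFinB.
Unshelve. all: by end_near.
Qed.

Lemma cvg_inv_abs_ln0 : (`|ln t|^-1 @[t --> (0 : R)^'+] --> (0 : R^o))%R.
Proof.
have abs_ln_gt0 : \forall t \near (0 : R)^'+, (0 < `|ln t|)%R.
  near=> t; rewrite normr_gt0 lt_eqF// ln_lt0//.
  by apply/andP; split; near: t; [exact: nbhs_right_gt|exact: nbhs_right_lt].
apply/(gtr0_cvgV0 abs_ln_gt0)/cvgryPge => A.
apply: filterS (proj1 (cvgrNyPle _) (@lnNy R) (- A)%R) => t.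
by rewrite lerNr => /le_trans; apply; rewrite -normrN ler_norm.
Unshelve. all: by end_near.
Qed.

End limits_at_right0.

Lemma delta_c_cvg {R : realType} (P : probability R R) (l : R) :
  entropy_ratio P t @[t --> 0^'+] --> l%:E -> delta_c P = (1 - l)%:E.
Proof. by move=> /liminf_at0_cvg Pl; rewrite /delta_c Pl EFinB. Qed.

Section entropy_ratio_mixture.
Context {R : realType} (k : nat) (mu : 'I_k -> probability R R) (alpha : 'I_k -> R).
Variable rho : probability R R.
Hypotheses (alpha_ge0 : forall j, 0 <= alpha j) (alpha_sum1 : \sum_(j < k) alpha j = 1).
Hypothesis rhoE : forall A, measurable A ->
  rho A = (\sum_(j < k) (alpha j)%:E * mu j A)%E.

Lemma gauss_smooth_density_mixture t : t != 0 ->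
  gauss_smooth_density rho t =
  (fun x => \sum_(j < k) alpha j * gauss_smooth_density (mu j) t x).
Proof.
move=> t_neq0; apply/funext => x; apply: EFin_inj.
rewrite gauss_smooth_densityE// (ge0_integral_mixture alpha_ge0 rhoE); last 2 first.
- apply/measurable_EFinP; under eq_fun do rewrite normal_pdfC//.
  exact: measurable_normal_pdf.
- by move=> y; rewrite lee_fin normal_pdf_ge0.
by rewrite -sumEFin; apply: eq_bigr => j _; rewrite EFinM gauss_smooth_densityE.
Qed.

Lemma entropy_ratio_mixture_bounds t : 0 < t < 1 ->
  (forall j, entropy_ratio (mu j) t \is a fin_num) ->
  ((\sum_(j < k) alpha j * fine (entropy_ratio (mu j) t)
      + (\sum_(j < k) alpha j * ln (alpha j)) * `|ln t|^-1)%:E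
    <= entropy_ratio rho t
    <= (\sum_(j < k) alpha j * fine (entropy_ratio (mu j) t))%:E)%E.
Proof.
move=> /andP[t_gt0 t_lt1] ratio_fin.
have t_neq0 : t != 0 by rewrite gt_eqF.
have s_gt0 : 0 < `|ln t|^-1 by rewrite invr_gt0 normr_gt0 lt_eqF// ln_lt0 ?t_gt0.
have H_fin j : entropyH (gauss_smooth_density (mu j) t) \is a fin_num.
  by rewrite -(fin_numMr_gt0 _ s_gt0); exact: ratio_fin.
have ratioE j : fine (entropy_ratio (mu j) t) =
    fine (entropyH (gauss_smooth_density (mu j) t)) * `|ln t|^-1.
  by rewrite /entropy_ratio fineM.
have sum_ratioE : \sum_(j < k) alpha j * fine (entropy_ratio (mu j) t) =
    (\sum_(j < k) alpha j * fine (entropyH (gauss_smooth_density (mu j) t))) * `|ln t|^-1.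
  by rewrite mulr_suml; apply: eq_bigr => j _; rewrite ratioE mulrA.
rewrite sum_ratioE -mulrDl !EFinM /entropy_ratio lee_pmul2r// lee_pmul2r//.
rewrite gauss_smooth_density_mixture//.
have integrable_xlnx j : lebesgue_measure.-integrable setT
    (fun x => (gauss_smooth_density (mu j) t x * ln (gauss_smooth_density (mu j) t x))%:E).
  apply: integrable_xlnx_entropyH_fin_num; last exact: H_fin.
  exact: measurable_gauss_smooth_density.
have dens_ge0 j := gauss_smooth_density_ge0 t (mu j).
have dens_meas j := measurable_gauss_smooth_density t_neq0 (mu j).
have dens_int j := integral_gauss_smooth_density t_neq0 (mu j).
by rewrite entropyH_mixture_ge// entropyH_mixture_le.
Qed.

Lemma entropy_ratio_mixture_cvg (l : 'I_k -> R) :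
  (forall j, entropy_ratio (mu j) t @[t --> 0^'+] --> (l j)%:E) ->
  entropy_ratio rho t @[t --> 0^'+] --> (\sum_(j < k) alpha j * l j)%:E.
Proof.
move=> mu_cvg.
have EFin_cvg (g : R -> R) (a : R) :
    g t @[t --> 0^'+] --> (a : R^o) -> (g t)%:E @[t --> 0^'+] --> a%:E.
  by move=> ga; apply: cvg_EFin => //; exact: nearW.
have upper_cvg : \sum_(j < k) alpha j * fine (entropy_ratio (mu j) t) @[t --> 0^'+] -->
    \sum_(j < k) alpha j * l j.
  apply: cvg_big => [|j _]; first exact: add_continuous.
  by apply: cvgMl_tmp; have /fine_cvgP[] := mu_cvg j.
have lower_cvg : \sum_(j < k) alpha j * fine (entropy_ratio (mu j) t)
    + (\sum_(j < k) alpha j * ln (alpha j)) * `|ln t|^-1 @[t --> 0^'+] -->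
    \sum_(j < k) alpha j * l j.
  have := cvgD upper_cvg
    (cvgMl_tmp (a := \sum_(j < k) alpha j * ln (alpha j)) cvg_inv_abs_ln0).
  by rewrite mulr0 addr0; apply.
apply: squeeze_cvge (EFin_cvg _ _ lower_cvg) (EFin_cvg _ _ upper_cvg).
have ratio_fin : \forall t \near 0^'+, forall j, entropy_ratio (mu j) t \is a fin_num.
  by apply: filter_forall => j; have /fine_cvgP[] := mu_cvg j.
near=> t; apply: entropy_ratio_mixture_bounds; last by near: t.
by apply/andP; split; near: t; [exact: nbhs_right_gt|exact: nbhs_right_lt].
Unshelve. all: by end_near.
Qed.

End entropy_ratio_mixture.

Theorem corollary2p3 (R : realType) (k : nat)
  (mu : 'I_k -> probability R R) (alpha : 'I_k -> R)
  (rho : probability R R)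
  (hlim : forall j, exists l : R,
      entropy_ratio (mu j) t @[t --> 0^'+] --> l%:E)
  (halpha0 : forall j, 0 <= alpha j)
  (halpha1 : \sum_(j < k) alpha j = 1)
  (hrho : forall A : set R, measurable A ->
      rho A = (\sum_(j < k) (alpha j)%:E * mu j A)%E) :
  delta_c rho = (\sum_(j < k) (alpha j)%:E * delta_c (mu j))%E.
Proof.
have [l mu_cvg] := choice hlim.
rewrite (delta_c_cvg (entropy_ratio_mixture_cvg halpha0 halpha1 hrho mu_cvg)).
rewrite (eq_bigr (fun j => (alpha j * (1 - l j))%:E)) => [|j _]; last first.
  by rewrite (delta_c_cvg (mu_cvg j)).
rewrite sumEFin; congr EFin; rewrite -[in LHS]halpha1 -sumrB.
by apply: eq_bigr => j _; rewrite mulrBr mulr1.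
Qed.
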